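(* Let $\mathcal{F}$ be one of the crash or omission failure models $\mathit{Crash}_t$, $\mathit{ComCrash}_t$, $SO_t$, $RO_t$, $GO_t$, let $\mathcal{E}$ be an information exchange and $P$ a decision protocol, and let $p$ be an atomic proposition whose truth value at a point $(r,m)$ of $\mathcal{I}_{P,\mathcal{E},\mathcal{F}}$ depends only on the local states $r_1(m),\dots,r_n(m)$ of the agents. Then for every agent $i$, the formula $B^{\mathcal{N}}_i\,CB_{\mathcal{N}}\,p\Leftrightarrow B^{\mathcal{A}}_i\,CB_{\mathcal{A}}\,p$ is valid in $\mathcal{I}_{P,\mathcal{E},\mathcal{F}}$.
   Context: Agents $\mathrm{Agt}=\{1,\dots,n\}$; decision values $V$; actions $A_i=\{\mathtt{noop}\}\cup\{\mathtt{decide}_i(v):v\in V\}$. An information exchange $\mathcal{E}$ gives each agent $i$ a tuple $(L_i,I_i,M_i,\mu_i,\delta_i)$: local states $L_i$ of form $\langle\mathit{init}_i,\mathit{time}_i,\dots\rangle$ (for the hard crash model also a special state $\mathit{crashed}$), initial states $I_i$, messages $M_i\ni\bot$ ($\bot$ = no message), $\mu_i:L_i\times A_i\to(\mathrm{Agt}\to M_i)$, $\delta_i:L_i\times A_i\times\prod_jM_j\to L_i$ (preserving $\mathit{init}_i$, incrementing $\mathit{time}_i$). A decision protocol is $P=(P_i:L_i\to A_i)_i$. A failure model $(L^*_e,I_e,\delta_e,\mathit{Adv})$ has environment states, initial ones, update $\delta_e$, and adversaries $(\Delta^t,\Delta^r,\Delta^s)$ with $\Delta^t,\Delta^r:\mathbb{N}\times\mathrm{Agt}\times\mathrm{Agt}\times\bigcup_iM_i\to\bigcup_iM_i$,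 $\Delta^s_i:\mathbb{N}\times L_i\to L_i$. Runs $r$ of $\mathcal{I}_{P,\mathcal{E},\mathcal{F}}$: $r(0)=((s_e,\alpha),s_1,\dots,s_n)$ with $s_e\in I_e,\alpha\in\mathit{Adv},s_i\in I_i$; from $r(k)=((s_e,\alpha),s_1,\dots,s_n)$, $r(k+1)=((\delta_e(s_e,(a_1,\dots,a_n)),\alpha),s'_1,\dots,s'_n)$ with $a_i=P_i(s_i)$, $m_{i,j}=\mu_i(s_i,a_i)(j)$, $m'_{i,j}=\Delta^r(k,i,j,\Delta^t(k,i,j,m_{i,j}))$, $s^*_j=\delta_j(s_j,a_j,(m'_{1,j},\dots,m'_{n,j}))$, $s'_j=\Delta^s_j(k,s^*_j)$. An agent has a fault in a round if its sent messages are altered by $\Delta^t$, its received messages altered by $\Delta^r$, or its updated state altered by $\Delta^s$. $\mathcal{N}(r,m)$ = agents with no fault in any round of $r$; $\mathcal{A}(r,m)$ = agents with no fault in rounds $1..m$. Failure models (a component is ''correct'' for an agent if it acts as the identity on that agent's state / sent messages / received messages): $\mathit{Crash}_t$: at most $t$ agents crash; $\Delta^r$ correct; an agent crashing in round $k+1$ has $\Delta^s_i(k',\cdot)\equiv\mathit{crashed}$ for $k'\ge k$, sends in round $k+1$ only to agents outside some $J\subseteq\mathrm{Agt}$ (messages to $J$ become $\bot$), and sends only $\bot$ afterwards; non-crashing agents correct. $\mathit{ComCrash}_t$: same but $\Delta^s$ correct for all and no crashed state. $SO_t$: $\Delta^s,\Delta^r$ correct; at most $t$ agents may have messages they send replaced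 by $\bot$. $RO_t$: $\Delta^s,\Delta^t$ correct; at most $t$ agents may have messages they receive replaced by $\bot$. $GO_t$: $\Delta^s$ correct; at most $t$ agents may have sending and/or receiving omissions. $(r,m)\sim_i(r',m')$ iff $r_i(m)=r'_i(m')$; $K_i\phi$ holds iff $\phi$ holds at all $\sim_i$-related points. For an indexical set $S$: $B^S_i\phi:=K_i(i\in S\Rightarrow\phi)$, $E^B_S\phi:=\bigwedge_{i\in S}B^S_i\phi$, $CB_S\phi:=\bigwedge_{k\ge1}(E^B_S)^k\phi$. *)

From mathcomp Require Import all_boot.

(* Actions A_i = {noop} ∪ {decide_i(v) : v ∈ V} (agent index left implicit). *)
Inductive action (V : Type) : Type := noop | decide (v : V).
Arguments noop {V}.
Arguments decide {V} v.

(* All agents share one message type M containing bot. *)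
Record InfoExchange (n : nat) (V M : Type) := {
  lst : 'I_n -> Type;
  init_ty : 'I_n -> Type;
  init_of : forall i, lst i -> init_ty i;
  time_of : forall i, lst i -> nat;
  initial : forall i, lst i -> Prop;
  mu : forall i, lst i -> action V -> 'I_n -> M;
  delta : forall i, lst i -> action V -> ('I_n -> M) -> lst i }.

Arguments lst {n V M} _ _.
Arguments init_of {n V M} _ _ _.
Arguments time_of {n V M} _ _ _.
Arguments initial {n V M} _ _ _.
Arguments mu {n V M} _ _ _ _ _.
Arguments delta {n V M} _ _ _ _ _.

Definition wf_exchange {n V M} (E : InfoExchange n V M) : Prop :=
  (forall i (s : lst E i), initial E i s -> time_of E i s = 0) /\
  (forall i (s : lst E i) a ms,
      init_of E i (delta E i s a ms) = init_of E i s /\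
      time_of E i (delta E i s a ms) = (time_of E i s).+1).

Definition protocol {n V M} (E : InfoExchange n V M) :=
  forall i, lst E i -> action V.

(* Local states as they occur in runs: [None] is the special state [crashed]
   (reachable only in the hard crash model Crash_t). *)
Definition lstate {n V M} (E : InfoExchange n V M) (i : 'I_n) := option (lst E i).

Record adversary (n : nat) (M : Type) (LS : 'I_n -> Type) := {
  adv_t : nat -> 'I_n -> 'I_n -> M -> M;
  adv_r : nat -> 'I_n -> 'I_n -> M -> M;
  adv_s : forall i, nat -> LS i -> LS i }.
Arguments adv_t {n M LS} _ _ _ _ _.
Arguments adv_r {n M LS} _ _ _ _ _.
Arguments adv_s {n M LS} _ i _ _.

Inductive fmodel := FCrash | FComCrash | FSO | FRO | FGO.

Record gstate {n V M} (E : InfoExchange n V M) (Le : Type) := {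
  genv : Le;
  gadv : adversary n M (lstate E);
  gloc : forall i, lstate E i }.
Arguments genv {n V M E Le} _.
Arguments gadv {n V M E Le} _.
Arguments gloc {n V M E Le} _ i.

Section System.
Context {n : nat} {V M : Type} (bot : M) (E : InfoExchange n V M)
  (P : protocol E) (Le : Type) (Ie : Le -> Prop)
  (de : Le -> (forall i : 'I_n, action V) -> Le) (fm : fmodel) (t : nat).

Implicit Types (alpha : adversary n M (lstate E)) (g : gstate E Le).

Definition correct_t alpha i := forall k j x, adv_t alpha k i j x = x.
Definition correct_r alpha i := forall k j x, adv_r alpha k j i x = x.
Definition correct_s alpha i := forall k s, adv_s alpha i k s = s.

(* agent i crashes in round k+1 (hard: its state becomes [crashed]). *)
Definition crash_beh (hard : bool) alpha i :=
  exists (k : nat) (J : {set 'I_n}),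
    (forall k' s, k' < k -> adv_s alpha i k' s = s) /\
    (forall k' s, k <= k' -> adv_s alpha i k' s = if hard then None else s) /\
    (forall k' j x, k' < k -> adv_t alpha k' i j x = x) /\
    (forall j x, adv_t alpha k i j x = if j \in J then bot else x) /\
    (forall k' j x, k < k' -> adv_t alpha k' i j x = bot).

Definition adv_ok alpha : Prop :=
  match fm with
  | FCrash =>
      (forall i, correct_r alpha i) /\
      exists C : {set 'I_n}, #|C| <= t /\ forall i,
        (i \in C -> crash_beh true alpha i) /\
        (i \notin C -> correct_t alpha i /\ correct_s alpha i)
  | FComCrash =>
      (forall i, correct_r alpha i) /\
      exists C : {set 'I_n}, #|C| <= t /\ forall i,
        (i \in C -> crash_beh false alpha i) /\
        (i \notin C -> correct_t alpha i /\ correct_s alpha i)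
  | FSO =>
      (forall i, correct_s alpha i /\ correct_r alpha i) /\
      exists C : {set 'I_n}, #|C| <= t /\ forall i,
        (i \notin C -> correct_t alpha i) /\
        (forall k j x, adv_t alpha k i j x = x \/ adv_t alpha k i j x = bot)
  | FRO =>
      (forall i, correct_s alpha i /\ correct_t alpha i) /\
      exists C : {set 'I_n}, #|C| <= t /\ forall i,
        (i \notin C -> correct_r alpha i) /\
        (forall k j x, adv_r alpha k j i x = x \/ adv_r alpha k j i x = bot)
  | FGO =>
      (forall i, correct_s alpha i) /\
      exists C : {set 'I_n}, #|C| <= t /\ forall i,
        (i \notin C -> correct_t alpha i /\ correct_r alpha i) /\
        (forall k j x, adv_t alpha k i j x = x \/ adv_t alpha k i j x = bot) /\
        (forall k j x, adv_r alpha k j i x = x \/ adv_r alpha k j i x = bot)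
  end.

Definition act_of i (s : lstate E i) : action V :=
  match s with Some s => P i s | None => noop end.
Definition msg_of i (s : lstate E i) (a : action V) (j : 'I_n) : M :=
  match s with Some s => mu E i s a j | None => bot end.
Definition upd i (s : lstate E i) (a : action V) (ms : 'I_n -> M) : lstate E i :=
  match s with Some s => Some (delta E i s a ms) | None => None end.

Definition acts g i := act_of i (gloc g i).
Definition msgs g i j := msg_of i (gloc g i) (acts g i) j.
Definition sent g k i j := adv_t (gadv g) k i j (msgs g i j).
Definition recvd g k i j := adv_r (gadv g) k i j (sent g k i j).
Definition sstar g k j := upd j (gloc g j) (acts g j) (fun i => recvd g k i j).

Definition next k g : gstate E Le :=
  {| genv := de (genv g) (acts g);
     gadv := gadv g;
     gloc := fun j => adv_s (gadv g) j k (sstar g k j) |}.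

Definition run := nat -> gstate E Le.

Definition is_run (r : run) : Prop :=
  Ie (genv (r 0)) /\ adv_ok (gadv (r 0)) /\
  (forall i, exists s, gloc (r 0) i = Some s /\ initial E i s) /\
  (forall k, r k.+1 = next k (r k)).

(* agent i has a fault in round k+1 of r *)
Definition fault (r : run) (k : nat) (i : 'I_n) : Prop :=
  (exists j, sent (r k) k i j <> msgs (r k) i j) \/
  (exists j, recvd (r k) k j i <> sent (r k) k j i) \/
  adv_s (gadv (r k)) i k (sstar (r k) k i) <> sstar (r k) k i.

Definition iset := run -> nat -> 'I_n -> Prop.
Definition Nset : iset := fun r _ i => forall k, ~ fault r k i.
Definition Aset : iset := fun r m i => forall k, k < m -> ~ fault r k i.

Definition formula := run -> nat -> Prop.

Definition indist i (r : run) m (r' : run) m' := gloc (r m) i = gloc (r' m') i.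

Definition Bel (S : iset) i (phi : formula) : formula := fun r m =>
  forall r' m', is_run r' -> indist i r m r' m' -> S r' m' i -> phi r' m'.

Definition EB (S : iset) (phi : formula) : formula := fun r m =>
  forall i, S r m i -> Bel S i phi r m.

Definition CB (S : iset) (phi : formula) : formula := fun r m =>
  forall k, 1 <= k -> iter k (EB S) phi r m.

Definition local_prop (p : formula) : Prop :=
  forall r m r' m', is_run r -> is_run r' ->
    (forall i, gloc (r m) i = gloc (r' m') i) -> (p r m <-> p r' m').

Definition valid (phi : formula) : Prop := forall r m, is_run r -> phi r m.

End System.

(** Given a point (r, m), heal the adversary of r on the agents that are
    nonfaulty up to time m, i.e. make it act as the identity on everything
    they send, receive and compute.  Since these agents behave correctly in
    the first m rounds anyway, the healed run r' has the same local states at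
    time m, it is still admissible (its faulty set only shrinks), and its
    forever-nonfaulty agents at time m are exactly the agents of A(r, m).
    By induction on k, healing again at every point reached, this transports
    E_N^k p from (r', m) to E_A^k p at (r, m), because p is local;
    conversely N ⊆ A makes every A-belief an N-belief. *)

From Stdlib Require Import ClassicalEpsilon FunctionalExtensionality.
From Pilot Require Import Defs.
From mathcomp Require Import all_boot.

Section Healing.
Context {n : nat} {V M : Type} {bot : M} {E : InfoExchange n V M}
  {P : protocol E} {Le : Type} {Ie : Le -> Prop}
  {de : Le -> (forall i : 'I_n, action V) -> Le} {fm : fmodel} {t : nat}.

Local Notation adv := (adversary n M (lstate E)).
Local Notation run := (run E Le).
Local Notation adv_ok := (adv_ok bot E fm t).
Local Notation is_run := (is_run bot E P Le Ie de fm t).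
Local Notation fault := (fault bot E P Le).
Local Notation Nset := (Nset bot E P Le).
Local Notation Aset := (Aset bot E P Le).
Local Notation EB := (EB bot E P Le Ie de fm t).
Local Notation msgs := (msgs bot E P Le).
Local Notation sent := (sent bot E P Le).
Local Notation recvd := (recvd bot E P Le).
Local Notation sstar := (sstar bot E P Le).
Local Notation next := (Defs.next bot E P Le de).

Implicit Types (D : pred 'I_n) (al : adv).

Definition heal (D : pred 'I_n) (al : adv) : adv :=
  {| adv_t := fun k i j x => if D i then x else adv_t al k i j x;
     adv_r := fun k i j x => if D j then x else adv_r al k i j x;
     adv_s := fun i k s => if D i then s else adv_s al i k s |}.

Definition classic_pred (A : 'I_n -> Prop) : pred 'I_n :=
  fun j => if excluded_middle_informative (A j) then true else false.

Lemma classic_predP (A : 'I_n -> Prop) j : classic_pred A j <-> A j.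
Proof. by rewrite /classic_pred; case: excluded_middle_informative. Qed.

Lemma heal_faulty_set D (C : {set 'I_n}) : #|C| <= t ->
  #|[set i in C | ~~ D i]| <= t.
Proof.
by apply: leq_trans; apply/subset_leq_card/subsetP => i; rewrite inE => /andP[].
Qed.

Lemma adv_ok_heal D al : adv_ok al -> adv_ok (heal D al).
Proof.
(* Healed agents are correct in every component and leave the faulty set;
   on the other agents [heal D al] acts exactly as [al]. *)
rewrite /Defs.adv_ok; case: fm => -[Hall [C [/(heal_faulty_set D) HC HCi]]].
all: split=> [i|]; [move: (Hall i) | exists [set i in C | ~~ D i]; split=> // i].
all: rewrite ?inE /Defs.crash_beh /Defs.correct_t /Defs.correct_r /Defs.correct_s /=.
all: try (case: (D i); by intuition).
all: case Di: (D i); rewrite ?andbT ?andbF /=; last exact: HCi.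
all: by intuition.
Qed.

Lemma gadv_run {r : run} k : is_run r -> gadv (r k) = gadv (r 0).
Proof. by case=> _ [_ [_ Hr]]; elim: k => [|k IH] //; rewrite Hr. Qed.

Definition heal_run D (r : run) : run := fun k => iteri k next
  {| genv := genv (r 0); gadv := heal D (gadv (r 0)); gloc := gloc (r 0) |}.

Section HealedRun.
Context {D : pred 'I_n} {r : run}.
Hypothesis r_run : is_run r.
Local Notation r' := (heal_run D r).

Lemma heal_run_is_run : is_run r'.
Proof.
by case: r_run => Ie0 [ok0 [init0 _]]; split; [|split; [exact: adv_ok_heal|]].
Qed.

Lemma gadv_heal_run k : gadv (r' k) = heal D (gadv (r k)).
Proof. by rewrite (gadv_run k heal_run_is_run) (gadv_run k r_run). Qed.

Lemma heal_run_faultless k j : D j -> ~ fault r' k j.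
Proof.
move=> Dj; rewrite /Defs.fault /recvd /Defs.recvd /sent /Defs.sent.
by rewrite gadv_heal_run /= Dj; case=> [[]|[[]|]].
Qed.

Section HealedRound.
Context {k : nat}.
Hypotheses (loc_eq : gloc (r' k) = gloc (r k))
  (D_faultless : forall j, D j -> ~ fault r k j).

Lemma msgs_heal i j : msgs (r' k) i j = msgs (r k) i j.
Proof. by rewrite /Defs.msgs /acts loc_eq. Qed.

Lemma sent_heal i j : sent (r' k) k i j = sent (r k) k i j.
Proof.
rewrite {1}/Defs.sent gadv_heal_run /= msgs_heal.
case Di: (D i) => //; apply: NNPP => ne; apply: (D_faultless _ Di).
by left; exists j => /esym/ne.
Qed.

Lemma recvd_heal i j : recvd (r' k) k i j = recvd (r k) k i j.
Proof.
rewrite {1}/Defs.recvd gadv_heal_run /= sent_heal.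
case Dj: (D j) => //; apply: NNPP => ne; apply: (D_faultless _ Dj).
by right; left; exists i => /esym/ne.
Qed.

Lemma sstar_heal j : sstar (r' k) k j = sstar (r k) k j.
Proof.
rewrite /Defs.sstar /acts loc_eq.
by congr upd; apply: functional_extensionality => i; apply: recvd_heal.
Qed.

Lemma state_heal j : adv_s (gadv (r' k)) j k (sstar (r' k) k j) =
                     adv_s (gadv (r k)) j k (sstar (r k) k j).
Proof.
rewrite gadv_heal_run /= sstar_heal.
case Dj: (D j) => //; apply: NNPP => ne; apply: (D_faultless _ Dj).
by right; right => /esym/ne.
Qed.

Lemma gloc_heal_run_next : gloc (r' k.+1) = gloc (r k.+1).
Proof.
case: r_run => _ [_ [_ ->]]; apply: functional_extensionality_dep => j.
exact: state_heal.
Qed.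

Lemma fault_heal_run j : fault r k j -> fault r' k j.
Proof.
case=> [[j' Hj']|[[j' Hj']|Hj']].
- by left; exists j'; rewrite sent_heal msgs_heal.
- by right; left; exists j'; rewrite recvd_heal sent_heal.
- by right; right; rewrite state_heal sstar_heal.
Qed.

End HealedRound.

Lemma gloc_heal_run {m} :
  (forall k, k < m -> forall j, D j -> ~ fault r k j) ->
  forall k, k <= m -> gloc (r' k) = gloc (r k).
Proof.
move=> D_faultless; elim=> [|k IH] // km.
exact: (gloc_heal_run_next (IH (ltnW km)) (D_faultless k km)).
Qed.

End HealedRun.

Lemma healed_run_exists (r : run) m : is_run r ->
  exists r' : run, [/\ is_run r',
    forall i, gloc (r' m) i = gloc (r m) i &
    forall j, Nset r' m j <-> Aset r m j].
Proof.
move=> r_run; pose D := classic_pred (Aset r m).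
have D_faultless k : k < m -> forall j, D j -> ~ fault r k j.
  by move=> km j /classic_predP; apply.
have loc_eq := gloc_heal_run r_run D_faultless.
exists (heal_run D r); split=> [|i|j]; first exact: heal_run_is_run.
- by rewrite loc_eq.
split=> [Nj k km | /classic_predP Dj k]; last exact: heal_run_faultless.
by move/(fault_heal_run r_run (loc_eq k (ltnW km)) (D_faultless k km)); apply: Nj.
Qed.

Lemma iter_EB_sub {S S' : iset E Le} :
  (forall r m i, S r m i -> S' r m i) ->
  forall phi k r m, iter k (EB S') phi r m -> iter k (EB S) phi r m.
Proof.
move=> SS' phi; elim=> [|k IH] //= r m H j Sj r' m' Hr' Hind S'j.
by apply/IH/(H j (SS' _ _ _ Sj) r' m' Hr' Hind (SS' _ _ _ S'j)).
Qed.

Lemma Nset_sub_Aset r m i : Nset r m i -> Aset r m i.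
Proof. by move=> Ni k _; apply: Ni. Qed.

Lemma iter_EB_Nset_Aset {p : formula E Le} :
  local_prop bot E P Le Ie de fm t p ->
  forall k {r r' : run} {m}, is_run r -> is_run r' ->
  (forall i, gloc (r' m) i = gloc (r m) i) ->
  (forall j, Nset r' m j <-> Aset r m j) ->
  iter k (EB Nset) p r' m -> iter k (EB Aset) p r m.
Proof.
move=> p_local; elim=> [|k IH] r r' m Hr Hr' loc_eq NA /=.
  by move/(p_local r' m r m Hr' Hr loc_eq).
move=> H j Aj r2 m2 Hr2 Hind A2.
have [r2' [Hr2' loc_eq2 NA2]] := healed_run_exists r2 m2 Hr2.
apply: (IH r2 r2' m2 Hr2 Hr2' loc_eq2 NA2).
apply: (H j (proj2 (NA j) Aj) r2' m2 Hr2') => //.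
- by rewrite /indist loc_eq loc_eq2.
- exact: (proj2 (NA2 j)).
Qed.

End Healing.

Theorem corollary11 (n : nat) (V M : Type) (bot : M) (E : InfoExchange n V M)
  (P : protocol E) (Le : Type) (Ie : Le -> Prop)
  (de : Le -> (forall i : 'I_n, action V) -> Le) (fm : fmodel) (t : nat)
  (p : formula E Le) :
  wf_exchange E ->
  local_prop bot E P Le Ie de fm t p ->
  forall i : 'I_n,
    valid bot E P Le Ie de fm t (fun r m =>
      Bel bot E P Le Ie de fm t (Nset bot E P Le) i
        (CB bot E P Le Ie de fm t (Nset bot E P Le) p) r m <->
      Bel bot E P Le Ie de fm t (Aset bot E P Le) i
        (CB bot E P Le Ie de fm t (Aset bot E P Le) p) r m).
Proof.
move=> _ p_local i r m Hr; split.
- move=> HN r1 m1 Hr1 Hind Ai k k_gt0.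
  have [r1' [Hr1' loc_eq NA]] := healed_run_exists r1 m1 Hr1.
  apply: (iter_EB_Nset_Aset p_local k Hr1 Hr1' loc_eq NA).
  by apply: (HN r1' m1 Hr1') => //; [rewrite /indist loc_eq | apply/NA].
- move=> HA r1 m1 Hr1 Hind Ni k k_gt0.
  apply: (iter_EB_sub Nset_sub_Aset).
  by apply: (HA r1 m1 Hr1 Hind) => //; apply: Nset_sub_Aset.
Qed.
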